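(* Let $p$ be an odd prime and $m=p-1$. For $b,b'\in\{0,\ldots,p-1\}$ with $b\ne b'$, if $b+b'=(p-1)/2$ or $b+b'=(3p-1)/2$, then $r_{ave}(\tilde E_b)=r_{ave}(\tilde E_{b'})$.
   Context: $h=(1,\ldots,m)$; $D_0$ is the $p\times m$ matrix whose $i$th row is $i\,h\pmod p$, $i=1,\ldots,p$. The Williams transformation on $\{0,\ldots,p-1\}$ is $W(x)=2x$ for $0\le x<p/2$ and $W(x)=2(p-x)-1$ for $p/2\le x\le p-1$. $D_b=D_0+b\pmod p$, $E_b=W(D_b)$ entrywise, and $\tilde E_b$ is obtained from $E_b$ by deleting its last row (which is $(W(b),\ldots,W(b))$) and replacing each entry $x$ by $x+1$ if $x<W(b)$ and by $x$ if $x>W(b)$. For an $m$-column matrix $O$, $r_{ave}(O)=\sum_{u\ne v}|r_{uv}(O)|/\{m(m-1)\}$ with $r_{uv}(O)$ the Pearson correlation between columns $u$ and $v$. *)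

From mathcomp Require Import all_boot all_order all_algebra.
Set Implicit Arguments. Unset Strict Implicit. Unset Printing Implicit Defensive.
Import Order.TTheory GRing.Theory Num.Theory.

Definition williams (p x : nat) : nat :=
  if (x.*2 < p)%N then x.*2 else ((p - x).*2 - 1)%N.

Definition Dentry (p b i j : nat) : nat := ((i * j + b) %% p)%N.

Definition Eentry (p b i j : nat) : nat := williams p (Dentry p b i j).

(* tilde E_b, with m = p-1 columns: delete the last row (i = p) of E_b,
   i.e. keep rows i = 1..p-1, and map x to x+1 if x < W(b), to x otherwise
   (the entries of the kept rows never equal W(b)).  Row index i : 'I_(p-1)
   stands for row i+1 of E_b, column index j : 'I_(p-1) for column j+1. *)
Definition tildeE_nat (p b : nat) : 'M[nat]_(p.-1, p.-1) :=
  \matrix_(i < p.-1, j < p.-1)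
    let x := Eentry p b i.+1 j.+1 in
    if (x < williams p b)%N then x.+1 else x.

Definition tildeE (R : rcfType) (p b : nat) : 'M[R]_(p.-1, p.-1) :=
  map_mx (fun x : nat => (x%:R : R)%R) (tildeE_nat p b).

Local Open Scope ring_scope.

Definition col_mean (R : rcfType) (n m : nat) (O : 'M[R]_(n, m)) (u : 'I_m) : R :=
  (\sum_(i < n) O i u) / n%:R.

Definition pearson (R : rcfType) (n m : nat) (O : 'M[R]_(n, m)) (u v : 'I_m) : R :=
  (\sum_(i < n) (O i u - col_mean O u) * (O i v - col_mean O v)) /
  (Num.sqrt (\sum_(i < n) (O i u - col_mean O u) ^+ 2) *
   Num.sqrt (\sum_(i < n) (O i v - col_mean O v) ^+ 2)).

Definition r_ave (R : rcfType) (n m : nat) (O : 'M[R]_(n, m)) : R :=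
  (\sum_(u < m) \sum_(v < m | u != v) `|pearson O u v|) / (m * (m - 1))%:R.

From mathcomp Require Import all_boot all_order all_algebra.
From mathcomp Require Import zify ring.
Set Implicit Arguments. Unset Strict Implicit.
Import Order.TTheory GRing.Theory Num.Theory.

(* Entrywise, tildeE_b'(i, j) + tildeE_b(i, m + 1 - j) = p.  Indeed
   D_b(i, p - j) + D_b'(i, j) = b + b' = (p - 1)/2 (mod p), and the Williams
   transformation sends any two residues summing to (p - 1)/2 modulo p to two
   values summing to p - 1; since also W(b) + W(b') = p - 1, the shift
   x |-> x + 1 below W(b) (resp. W(b')) turns that sum into p.  So tildeE_b' is
   tildeE_b with its columns reversed and every entry x replaced by p - x, and
   a Pearson correlation only changes by relabelling of the columns under such
   a transformation. *)

Lemma williams_lt p x : (x < p)%N -> (williams p x < p)%N.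
Proof. by rewrite /williams; case: ifP; lia. Qed.

Lemma williams_inj p x y : (x < p)%N -> (y < p)%N ->
  williams p x = williams p y -> x = y.
Proof. by rewrite /williams; case: ifP; case: ifP; lia. Qed.

Lemma williams_compl p d d' : odd p -> (d < p)%N -> (d' < p)%N ->
  d + d' = (p - 1)./2 %[mod p] -> (williams p d + williams p d' = p.-1)%N.
Proof.
move=> odd_p lt_dp lt_d'p.
rewrite [in RHS]modn_small; last by lia.
have sum_lt : ((d + d') %/ p < 2)%N by rewrite ltn_divLR //; lia.
have /[swap] -> := divn_eq (d + d') p.
rewrite /williams; case: ((d + d') %/ p) sum_lt => [|[|k]] //= _ sum_d;
  by case: ifP; case: ifP; lia.
Qed.

Lemma Dentry_neq_offset p b a c : prime p -> (0 < a < p)%N -> (0 < c < p)%N ->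
  (b < p)%N -> Dentry p b a c != b.
Proof.
move=> prime_p a_range c_range lt_bp; rewrite /Dentry; apply/eqP => Dab.
have : a * c + b == 0 + b %[mod p] by rewrite Dab add0n modn_small.
rewrite eqn_modDr mod0n -/(p %| a * c) Euclid_dvdM //.
by case/orP => /dvdn_leq; lia.
Qed.

Lemma Dentry_reflect_sum p b b' a c : (c <= p)%N ->
  Dentry p b a (p - c) + Dentry p b' a c = b + b' %[mod p].
Proof.
move=> le_cp; rewrite /Dentry modnDm.
have -> : (a * (p - c) + b + (a * c + b') = b + b' + a * p)%N.
  by rewrite mulnBr; have := leq_mul (leqnn a) le_cp; lia.
by rewrite -modnDmr modnMl addn0.
Qed.

Lemma tildeE_nat_reflect p b b' (i j : 'I_p.-1) :
  prime p -> odd p -> (b < p)%N -> (b' < p)%N ->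
  (b + b' = (p - 1)./2 \/ b + b' = (3 * p - 1)./2)%N ->
  (tildeE_nat p b' i j + tildeE_nat p b i (rev_ord j) = p)%N.
Proof.
move=> prime_p odd_p lt_bp lt_b'p bb'_sum.
have p_gt1 := prime_gt1 prime_p.
have lt_ip := ltn_ord i; have lt_jp := ltn_ord j.
rewrite !mxE /= /Eentry.
have -> : (p.-1 - j.+1).+1 = p - j.+1 by lia.
set D := Dentry p b i.+1 (p - j.+1); set D' := Dentry p b' i.+1 j.+1.
have lt_Dp : (D < p)%N by rewrite ltn_pmod //; lia.
have lt_D'p : (D' < p)%N by rewrite ltn_pmod //; lia.
have bb'_mod : b + b' = (p - 1)./2 %[mod p].
  case: bb'_sum => -> //.
  have -> : ((3 * p - 1)./2 = (p - 1)./2 + p)%N by lia.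
  by rewrite modnDr.
have WbWb' := williams_compl odd_p lt_bp lt_b'p bb'_mod.
have WDWD' : (williams p D + williams p D' = p.-1)%N.
  by apply: williams_compl; rewrite // Dentry_reflect_sum //; lia.
have D_neq : D != b by apply: Dentry_neq_offset => //; lia.
have WD_neq : williams p D != williams p b.
  by apply: contra_neq D_neq; apply: williams_inj.
have := williams_lt lt_Dp; have := williams_lt lt_bp.
move: WD_neq WbWb' WDWD'.
set w := williams p b; set w' := williams p b'.
set x := williams p D; set x' := williams p D' => /eqP.
by case: ifP; case: ifP; lia.
Qed.

Local Open Scope ring_scope.

Section ConstSubColumns.

Variables (R : rcfType) (n m : nat) (O O' : 'M[R]_(n, m)).
Variables (c : R) (sigma : 'I_m -> 'I_m).
Hypothesis O'E : forall i j, O' i j = c - O i (sigma j).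

Lemma centered_const_sub i u :
  O' i u - col_mean O' u = - (O i (sigma u) - col_mean O (sigma u)).
Proof.
have n_neq0 : n%:R != 0 :> R by rewrite pnatr_eq0 -lt0n (leq_ltn_trans _ (ltn_ord i)).
have -> : col_mean O' u = c - col_mean O (sigma u).
  rewrite /col_mean (eq_bigr _ (fun i _ => O'E i u)) sumrB sumr_const card_ord.
  by rewrite mulrBl -[c *+ n]mulr_natr mulfK.
by rewrite O'E; ring.
Qed.

Lemma pearson_const_sub u v : pearson O' u v = pearson O (sigma u) (sigma v).
Proof.
rewrite /pearson; congr (_ / (Num.sqrt _ * Num.sqrt _)).
- by apply: eq_bigr => i _; rewrite !centered_const_sub mulrNN.
- by apply: eq_bigr => i _; rewrite centered_const_sub sqrrN.
- by apply: eq_bigr => i _; rewrite centered_const_sub sqrrN.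
Qed.

Hypothesis sigma_inj : injective sigma.

Lemma r_ave_const_sub : r_ave O' = r_ave O.
Proof.
rewrite /r_ave; congr (_ / _).
rewrite [RHS](reindex_inj sigma_inj); apply: eq_bigr => u _.
rewrite [RHS](reindex_inj sigma_inj) /=.
apply: eq_big => v; first by rewrite (inj_eq sigma_inj).
by rewrite pearson_const_sub.
Qed.

End ConstSubColumns.

Theorem proposition1 (R : rcfType) (p b b' : nat) :
  prime p -> odd p -> (b < p)%N -> (b' < p)%N -> b != b' ->
  (b + b' = (p - 1)./2 \/ b + b' = (3 * p - 1)./2)%N ->
  r_ave (tildeE R p b) = r_ave (tildeE R p b').
Proof.
move=> prime_p odd_p lt_bp lt_b'p _ bb'_sum.
apply/esym/(r_ave_const_sub (c := p%:R) _ rev_ord_inj) => i j.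
have sum_p := tildeE_nat_reflect i j prime_p odd_p lt_bp lt_b'p bb'_sum.
rewrite [tildeE R p b' i j]mxE [tildeE R p b i _]mxE -[in X in _ = X - _]sum_p.
by rewrite natrD addrK.
Qed.
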